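(* Let $\nu\ge1/2$ and $b,\theta>0$ be fixed. As $\delta\to0$, $$\int_{-\pi}^{\pi}a^\delta_{b,\theta}(\lambda)\,d\lambda\sim(\delta\theta)^{\frac{2\nu}{2\nu+1}}(2\pi C_\nu b)^{\frac1{2\nu+1}}\int_{-\infty}^{\infty}\big(1+|x|^{2\nu+1}\big)^{-1}dx,$$ $$\int_{-\pi}^{\pi}\big[a^\delta_{b,\theta}(\lambda)\big]^2d\lambda\sim(\delta\theta)^{\frac{2\nu}{2\nu+1}}(2\pi C_\nu b)^{\frac1{2\nu+1}}\int_{-\infty}^{\infty}\big(1+|x|^{2\nu+1}\big)^{-2}dx.$$
   Context: For $\alpha>0$, $\omega\in\mathbb R$ let $g^*_{\nu,\alpha}(\omega)=C_\nu\alpha^{2\nu}(\alpha^2+\omega^2)^{-(\nu+1/2)}$ with $C_\nu=\Gamma(\nu+\frac12)/(\sqrt\pi\,\Gamma(\nu))$. For $\delta,\theta>0$ and $\lambda\in[-\pi,\pi]$ let $g^\delta_{\nu,\theta}(\lambda)=\sum_{k\in\mathbb Z}g^*_{\nu,\delta\theta}(\lambda+2k\pi)$, and for $b>0$, $a^\delta_{b,\theta}=\dfrac{b\,g^\delta_{\nu,\theta}}{b\,g^\delta_{\nu,\theta}+(2\pi)^{-1}}$. ''$\sim$'' means the ratio tends to $1$. *)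

From Stdlib Require Import Reals Lra Arith ClassicalEpsilon.
Open Scope R_scope.

(* Limit of a real sequence (0 if it does not converge; the limit is unique). *)
Definition lim_seq (u : nat -> R) : R :=
  match excluded_middle_informative (exists l, Un_cv u l) with
  | left H => proj1_sig (constructive_indefinite_description _ H)
  | right _ => 0
  end.

(* Riemann integral of f over [a,b] (0 if f is not Riemann integrable). *)
Definition Rint (f : R -> R) (a b : R) : R :=
  match excluded_middle_informative (inhabited (Riemann_integrable f a b)) with
  | left H => RiemannInt (epsilon H (fun _ => True))
  | right _ => 0
  end.

Definition improper_integral_R (f : R -> R) (l : R) : Prop :=
  forall eps, 0 < eps -> exists M, forall a b, a < - M -> M < b ->
    inhabited (Riemann_integrable f a b) /\ Rabs (Rint f a b - l) < eps.

Definition integral_R (f : R -> R) : R :=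
  match excluded_middle_informative (exists l, improper_integral_R f l) with
  | left H => proj1_sig (constructive_indefinite_description _ H)
  | right _ => 0
  end.

(* x^y for x >= 0, y > 0, with 0^y = 0 (Stdlib's Rpower 0 y = 1). *)
Definition rpow (x y : R) : R :=
  if Req_EM_T x 0 then 0 else Rpower x y.

(* Euler/Gauss product definition of the Gamma function (s > 0):
   Gamma(s) = lim_n n! n^s / (s (s+1) ... (s+n)). *)
Definition Gamma (s : R) : R :=
  lim_seq (fun n => INR (Factorial.fact n) * Rpower (INR n) s
                    / prod_f_R0 (fun k => s + INR k) n).

Definition C_nu (nu : R) : R := Gamma (nu + / 2) / (sqrt PI * Gamma nu).

Definition gstar (nu alpha omega : R) : R :=
  C_nu nu * Rpower alpha (2 * nu) * Rpower (alpha ^ 2 + omega ^ 2) (- (nu + / 2)).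

(* g^delta_{nu,theta}(lambda) = sum_{k in Z} g*_{nu,delta theta}(lambda + 2 k pi),
   as the limit of the symmetric partial sums over |k| <= N. *)
Definition gdelta (nu delta theta lambda : R) : R :=
  lim_seq (fun N => sum_f_R0 (fun k =>
     match k with
     | O => gstar nu (delta * theta) lambda
     | _ => gstar nu (delta * theta) (lambda + 2 * INR k * PI)
            + gstar nu (delta * theta) (lambda - 2 * INR k * PI)
     end) N).

Definition adelta (nu b delta theta lambda : R) : R :=
  b * gdelta nu delta theta lambda / (b * gdelta nu delta theta lambda + / (2 * PI)).

Definition equiv_at_0plus (f g : R -> R) : Prop :=
  forall eps, 0 < eps -> exists eta, 0 < eta /\
    forall delta, 0 < delta < eta -> Rabs (f delta / g delta - 1) < eps.

From Stdlib Require Import Reals Lra Lia ClassicalEpsilon FunctionalExtensionality Factorial.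
Open Scope R_scope.

(* Write alpha = delta*theta, c = 2 pi C_nu b, p = 2 nu + 1 and choose the
   scale L = alpha^(2nu/p) c^(1/p), so that L^p = c alpha^(2nu).  Then
   b g*/(b g* + 1/(2pi)) evaluated at lambda equals
   1/(1 + ((alpha/L)^2 + (lambda/L)^2)^(p/2)), a smoothed version of the
   profile 1/(1+|x|^p) at x = lambda/L.  The periodization adds to g* a term
   of order alpha^(2nu), which changes a^delta by O(L^p).  Hence for every
   "admissible" phi (here phi(y) = y and phi(y) = y^2)
     L (J - 2 alpha/L) <= int_{-pi}^{pi} phi(a^delta) <= L (J + 16 pi L^(2nu)),
   where J is the integral of phi(1/(1+|x|^p)) over [-pi/L, pi/L].  As
   delta -> 0, J tends to the improper integral I > 0, and alpha/L and L^(2nu)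
   tend to 0, so an abstract squeeze lemma gives the equivalence. *)

Lemma Rint_eq f a b (pr : Riemann_integrable f a b) : Rint f a b = RiemannInt pr.
Proof.
  unfold Rint. destruct excluded_middle_informative as [H|H].
  - apply RiemannInt_P5.
  - exfalso; apply H; constructor; exact pr.
Qed.

Lemma lim_seq_eq u l : Un_cv u l -> lim_seq u = l.
Proof.
  intro H. unfold lim_seq. destruct excluded_middle_informative as [H1|H1].
  - destruct (constructive_indefinite_description _ H1) as [l' Hl']. simpl.
    eapply UL_sequence; eauto.
  - exfalso; apply H1; eauto.
Qed.

(* Continuity combinators stated for lambda-terms (the library states them
   for the pointwise operations on functions, which do not unify directly). *)
Lemma cont_plus f g x : continuity_pt f x -> continuity_pt g x ->
  continuity_pt (fun y => f y + g y) x.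
Proof. intros; apply (continuity_pt_plus f g x); auto. Qed.
Lemma cont_minus f g x : continuity_pt f x -> continuity_pt g x ->
  continuity_pt (fun y => f y - g y) x.
Proof. intros; apply (continuity_pt_minus f g x); auto. Qed.
Lemma cont_mult f g x : continuity_pt f x -> continuity_pt g x ->
  continuity_pt (fun y => f y * g y) x.
Proof. intros; apply (continuity_pt_mult f g x); auto. Qed.
Lemma cont_inv f x : continuity_pt f x -> f x <> 0 ->
  continuity_pt (fun y => / f y) x.
Proof. intros; apply (continuity_pt_inv f x); auto. Qed.
Lemma cont_const c x : continuity_pt (fun _ => c) x.
Proof. apply continuity_pt_const. intros a b; reflexivity. Qed.
Lemma cont_id x : continuity_pt (fun y => y) x.
Proof. apply derivable_continuous_pt. exists 1. apply derivable_pt_lim_id. Qed.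
Lemma cont_comp f g x : continuity_pt g x -> continuity_pt f (g x) ->
  continuity_pt (fun y => f (g y)) x.
Proof. intros; apply (continuity_pt_comp g f x); auto. Qed.
Lemma cont_pow2 f x : continuity_pt f x -> continuity_pt (fun y => (f y)^2) x.
Proof.
  intros. replace (fun y => (f y)^2) with (fun y => f y * f y).
  - apply cont_mult; auto.
  - apply functional_extensionality; intro; ring.
Qed.
Lemma cont_affine u v x : continuity_pt (fun y => u * y + v) x.
Proof. apply cont_plus; [apply cont_mult; [apply cont_const|apply cont_id]|apply cont_const]. Qed.
Lemma cont_Rpower f e x : continuity_pt f x -> 0 < f x ->
  continuity_pt (fun y => Rpower (f y) e) x.
Proof.
  intros Hf Hp. unfold Rpower.
  apply (cont_comp exp (fun y => e * ln (f y))).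
  - apply cont_mult; [apply cont_const|].
    apply (cont_comp ln f); auto.
    apply derivable_continuous_pt. exists (/ f x). apply derivable_pt_lim_ln; auto.
  - apply derivable_continuous_pt. exists (exp (e * ln (f x))). apply derivable_pt_lim_exp.
Qed.

Lemma Rpower_pos x y : 0 < Rpower x y.
Proof. unfold Rpower. apply exp_pos. Qed.

Lemma integrable_cont f a b : a <= b -> (forall x, continuity_pt f x) ->
  Riemann_integrable f a b.
Proof. intros; apply continuity_implies_RiemannInt; auto. Qed.

Lemma derivable_pt_lim_affine u v x : derivable_pt_lim (fun x => u*x+v) x u.
Proof.
  assert (H : derivable_pt_lim ((mult_real_fct u id) + fct_cte v)%F x (u * 1 + 0)).
  { apply derivable_pt_lim_plus.
    - apply derivable_pt_lim_scal, derivable_pt_lim_id.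
    - apply derivable_pt_lim_const. }
  replace (u*1+0) with u in H by ring. exact H.
Qed.

Lemma Rint_affine f u v a b : 0 < u -> a <= b -> (forall x, continuity_pt f x) ->
  Rint (fun x => f (u*x+v)) a b = / u * Rint f (u*a+v) (u*b+v).
Proof.
  intros hu hab hf.
  assert (hAB : u*a+v <= u*b+v) by nra.
  assert (C0 : forall x, u*a+v <= x <= u*b+v -> continuity_pt f x) by auto.
  assert (C1 : forall x, a <= x <= b -> continuity_pt (fun x => f (u*x+v)) x).
  { intros x _. apply (cont_comp f (fun x => u*x+v)); [apply cont_affine|apply hf]. }
  pose (P := primitive hAB (FTC_P1 hAB C0)).
  pose (Q := primitive hab (FTC_P1 hab C1)).
  rewrite (Rint_eq _ _ _ (continuity_implies_RiemannInt hab C1)).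
  rewrite (Rint_eq _ _ _ (continuity_implies_RiemannInt hAB C0)).
  rewrite (RiemannInt_P20 hab (FTC_P1 hab C1)), (RiemannInt_P20 hAB (FTC_P1 hAB C0)).
  fold P Q.
  assert (HQ := RiemannInt_P29 hab C1). fold Q in HQ.
  assert (HR : antiderivative (fun x => f (u*x+v)) (fun x => / u * P (u*x+v)) a b).
  { split; [|exact hab]. intros x hx.
    assert (D : derivable_pt_lim (fun x => / u * P (u*x+v)) x (f (u*x+v))).
    { replace (f (u*x+v)) with (/ u * (f (u*x+v) * u)) by (field; lra).
      apply (derivable_pt_lim_scal (fun x => P (u*x+v))).
      apply (derivable_pt_lim_comp (fun x => u*x+v) P).
      - apply derivable_pt_lim_affine.
      - apply (RiemannInt_P28 hAB C0). nra. }
    exists (exist _ _ D). reflexivity. }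
  destruct (antiderivative_Ucte _ _ _ _ _ HQ HR) as [c Hc].
  rewrite (Hc a), (Hc b); [ring|lra|lra].
Qed.

Lemma Rint_antideriv f F a b : a <= b -> (forall x, continuity_pt f x) ->
  (forall x, derivable_pt_lim F x (f x)) -> Rint f a b = F b - F a.
Proof.
  intros hab hf hF.
  assert (C0 : forall x, a <= x <= b -> continuity_pt f x) by auto.
  pose (P := primitive hab (FTC_P1 hab C0)).
  rewrite (Rint_eq _ _ _ (continuity_implies_RiemannInt hab C0)).
  rewrite (RiemannInt_P20 hab (FTC_P1 hab C0)). fold P.
  assert (HP := RiemannInt_P29 hab C0). fold P in HP.
  assert (HR : antiderivative f F a b).
  { split; [|exact hab]. intros x hx. exists (exist _ _ (hF x)). reflexivity. }
  destruct (antiderivative_Ucte _ _ _ _ _ HP HR) as [c Hc].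
  rewrite (Hc a), (Hc b); [ring|lra|lra].
Qed.

Lemma Rint_le f g a b : a <= b -> Riemann_integrable f a b -> Riemann_integrable g a b ->
  (forall x, a < x < b -> f x <= g x) -> Rint f a b <= Rint g a b.
Proof.
  intros hab p1 p2 H. rewrite (Rint_eq _ _ _ p1), (Rint_eq _ _ _ p2).
  apply RiemannInt_P19; auto.
Qed.

Lemma Rint_le_cont f g a b : (forall x, continuity_pt f x) -> (forall x, continuity_pt g x) ->
  a <= b -> (forall x, a < x < b -> f x <= g x) -> Rint f a b <= Rint g a b.
Proof. intros. apply Rint_le; auto; apply integrable_cont; auto. Qed.

Lemma Rint_chasles f a b c : (forall x, continuity_pt f x) -> a <= b -> b <= c ->
  Rint f a b + Rint f b c = Rint f a c.
Proof.
  intros hf hab hbc.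
  pose proof (integrable_cont f a b hab hf) as p1.
  pose proof (integrable_cont f b c hbc hf) as p2.
  rewrite (Rint_eq _ _ _ p1), (Rint_eq _ _ _ p2), (Rint_eq _ _ _ (RiemannInt_P24 p1 p2)).
  apply RiemannInt_P26.
Qed.

Lemma Rint_const c a b : Rint (fun _ => c) a b = c * (b - a).
Proof.
  change (Rint (fct_cte c) a b = c * (b - a)).
  rewrite (Rint_eq _ _ _ (RiemannInt_P14 a b c)). apply RiemannInt_P15.
Qed.

Lemma Rint_plus_const f c a b : Riemann_integrable f a b ->
  Rint (fun x => f x + c) a b = Rint f a b + c * (b - a).
Proof.
  intro p.
  assert (E : (fun x => f x + c) = (fun x => f x + c * fct_cte 1 x)).
  { apply functional_extensionality; intro; unfold fct_cte; ring. }
  rewrite E. pose proof (RiemannInt_P10 c p (RiemannInt_P14 a b 1)) as p3.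
  rewrite (Rint_eq _ _ _ p3), (RiemannInt_P13 p (RiemannInt_P14 a b 1) p3).
  rewrite (Rint_eq _ _ _ p), RiemannInt_P15. ring.
Qed.

Lemma Rint_unit_bounds f a b : (forall x, continuity_pt f x) ->
  (forall x, 0 <= f x <= 1) -> a <= b -> 0 <= Rint f a b <= b - a.
Proof.
  intros hf h01 hab.
  replace 0 with (Rint (fun _ => 0) a b) by (rewrite Rint_const; ring).
  replace (b - a) with (Rint (fun _ => 1) a b) by (rewrite Rint_const; ring).
  split; apply Rint_le_cont; auto; try (intro; apply cont_const); intros; apply h01.
Qed.

Lemma Rint_shift_ge f v a b : (forall x, continuity_pt f x) ->
  (forall x, 0 <= f x <= 1) -> a <= b ->
  Rint f a b - Rabs v <= Rint (fun x => f (1 * x + v)) a b.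
Proof.
  intros hf h01 hab. rewrite Rint_affine by (auto; lra). rewrite Rinv_1, Rmult_1_l.
  replace (1 * a + v) with (a + v) by ring. replace (1 * b + v) with (b + v) by ring.
  destruct (Rle_or_lt 0 v) as [hv|hv].
  - rewrite Rabs_right by lra.
    pose proof (Rint_chasles f a (a + v) (b + v) hf ltac:(lra) ltac:(lra)).
    pose proof (Rint_chasles f a b (b + v) hf ltac:(lra) ltac:(lra)).
    pose proof (Rint_unit_bounds f a (a + v) hf h01 ltac:(lra)).
    pose proof (Rint_unit_bounds f b (b + v) hf h01 ltac:(lra)). lra.
  - rewrite Rabs_left by lra.
    pose proof (Rint_chasles f (a + v) (b + v) b hf ltac:(lra) ltac:(lra)).
    pose proof (Rint_chasles f (a + v) a b hf ltac:(lra) ltac:(lra)).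
    pose proof (Rint_unit_bounds f (b + v) b hf h01 ltac:(lra)).
    pose proof (Rint_unit_bounds f (a + v) a hf h01 ltac:(lra)). lra.
Qed.

Lemma inv_cv0 : Un_cv (fun n => / (INR n + 1)) 0.
Proof.
  intros eps he. destruct (archimed (/ eps)) as [h1 _].
  assert (0 < / eps) by (apply Rinv_0_lt_compat; lra).
  destruct (IZN (up (/ eps))) as [N HN]. { apply le_IZR. lra. }
  exists N. intros n hn. unfold Rdist. rewrite Rminus_0_r.
  apply le_INR in hn. rewrite HN, <- INR_IZR_INZ in h1.
  rewrite Rabs_right. 2:{ left; apply Rinv_0_lt_compat; pose proof (pos_INR n); lra. }
  apply Rmult_lt_reg_r with (INR n + 1). pose proof (pos_INR n); lra.
  rewrite Rinv_l by (pose proof (pos_INR n); lra).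
  apply Rmult_lt_reg_l with (/ eps). auto.
  rewrite <- Rmult_assoc, Rinv_l by lra. lra.
Qed.

Lemma Rabs_le_split x a : Rabs x <= a -> - a <= x <= a.
Proof. intro H. pose proof (Rle_abs x). pose proof (Rle_abs (-x)). rewrite Rabs_Ropp in *. lra. Qed.

Lemma Un_cv_const (c : R) : Un_cv (fun _ => c) c.
Proof. intros e he; exists 0%nat; intros; unfold Rdist; rewrite Rminus_diag, Rabs_R0; lra. Qed.

Lemma telescope_inv n : INR n + 1 <> 0 ->
  / (INR n + 1) - / (INR (S n) + 1) = / ((INR n + 1) * (INR n + 2)).
Proof. intro. rewrite S_INR. pose proof (pos_INR n). field. lra. Qed.

(* A sequence whose increments are bounded by C/((n+1)(n+2)) (a telescoping
   majorant) is Cauchy: u n - C/(n+1) increases, u n + C/(n+1) decreases. *)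
Lemma cv_of_incr (u : nat -> R) C :
  (forall n, Rabs (u (S n) - u n) <= C / ((INR n + 1) * (INR n + 2))) ->
  exists l, Un_cv u l.
Proof.
  intro H.
  assert (Hd : forall n, C / (INR n + 1) - C / (INR (S n) + 1)
                         = C / ((INR n + 1) * (INR n + 2))).
  { intro n. pose proof (pos_INR n). unfold Rdiv.
    rewrite <- telescope_inv by lra. ring. }
  pose (lo := fun n => u n - C / (INR n + 1)).
  pose (hi := fun n => u n + C / (INR n + 1)).
  assert (Hlo : Un_growing lo).
  { intro n. unfold lo. specialize (H n). specialize (Hd n). apply Rabs_le_split in H. lra. }
  assert (Hhi : forall n, hi n <= hi 0%nat).
  { induction n as [|n IH]; [lra|].
    specialize (H n). specialize (Hd n). apply Rabs_le_split in H. unfold hi in *. lra. }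
  assert (HC : 0 <= C).
  { specialize (H 0%nat). simpl in H. pose proof (Rabs_pos (u 1%nat - u 0%nat)).
    apply Rmult_le_reg_r with (/ ((0+1)*(0+2))); [apply Rinv_0_lt_compat; lra|lra]. }
  assert (Hub : has_ub lo).
  { exists (hi 0%nat). intros x [n ->]. specialize (Hhi n). unfold hi, lo in *.
    assert (0 <= C / (INR n + 1)).
    { pose proof (pos_INR n). apply Rmult_le_pos; [lra|left; apply Rinv_0_lt_compat; lra]. }
    lra. }
  destruct (growing_cv lo Hlo Hub) as [l Hl]. exists l.
  apply (Un_cv_ext (fun n => lo n + C * / (INR n + 1))).
  { intro n; unfold lo, Rdiv; ring. }
  replace l with (l + C * 0) by ring.
  apply CV_plus; [exact Hl|apply (CV_mult (fun _ => C)); [apply Un_cv_const|apply inv_cv0]].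
Qed.

Lemma tail_bound (u : nat -> R) D :
  (forall n, 0 <= u (S n) - u n <= D / ((INR n + 1) * (INR n + 2))) ->
  Un_cv u (lim_seq u) /\ forall n, 0 <= lim_seq u - u n <= D / (INR n + 1).
Proof.
  intro H.
  destruct (cv_of_incr u D) as [l Hl].
  { intro n. specialize (H n). rewrite Rabs_right; lra. }
  rewrite (lim_seq_eq _ _ Hl). split; auto. intro n.
  assert (Hg : Un_growing u) by (intro k; specialize (H k); lra).
  split; [pose proof (growing_ineq u l Hg Hl n); lra|].
  assert (Hm : forall m, u (n + m)%nat <= u n + D / (INR n + 1) - D / (INR (n + m) + 1)).
  { induction m as [|m IH]; [rewrite Nat.add_0_r; lra|].
    specialize (H (n + m)%nat). rewrite Nat.add_succ_r.
    pose proof (pos_INR (n+m)).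
    assert (D / (INR (n + m) + 1) - D / (INR (S (n + m)) + 1)
            = D / ((INR (n+m) + 1) * (INR (n+m) + 2))).
    { unfold Rdiv. rewrite <- telescope_inv by lra. ring. }
    lra. }
  assert (HD : 0 <= D).
  { specialize (H 0%nat). simpl in H.
    apply Rmult_le_reg_r with (/ ((0+1)*(0+2))); [apply Rinv_0_lt_compat; lra|lra]. }
  apply Rnot_lt_le. intro hlt.
  destruct (Hl (l - (u n + D / (INR n + 1)))) as [N HN]; [lra|].
  specialize (HN (n + N)%nat ltac:(lia)). specialize (Hm N).
  pose proof (pos_INR (n + N)).
  assert (0 <= D / (INR (n + N) + 1)) by (apply Rmult_le_pos; [lra|left; apply Rinv_0_lt_compat; lra]).
  unfold Rdist in HN. apply Rabs_def2 in HN. lra.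
Qed.

Lemma ln_le x y : 0 < x -> x <= y -> ln x <= ln y.
Proof. intros hx [h|h]; [left; apply ln_increasing; auto|subst; lra]. Qed.

Lemma ln_1plus_bounds x : 0 <= x -> x - x^2 <= ln (1 + x) <= x.
Proof.
  intro hx. split.
  - assert (H : / (1 + x) <= exp (- (x / (1 + x)))).
    { replace (/ (1 + x)) with (1 + - (x / (1+x))) by (field; lra). apply exp_ineq1_le. }
    apply ln_le in H; [|apply Rinv_0_lt_compat; lra].
    rewrite ln_exp, ln_Rinv in H by lra.
    assert (x^2 / (1 + x) <= x^2).
    { apply Rmult_le_reg_r with (1 + x); [lra|]. field_simplify; nra. }
    assert (x - x / (1 + x) = x^2 / (1+x)) by (field; lra). lra.
  - rewrite <- (ln_exp x) at 2. apply ln_le; [lra|apply exp_ineq1_le].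
Qed.

Lemma prod_pos s n : 0 < s -> 0 < prod_f_R0 (fun k => s + INR k) n.
Proof.
  intro. induction n as [|n IH]; [simpl; lra|].
  change (prod_f_R0 (fun k => s + INR k) (S n)) with
    (prod_f_R0 (fun k => s + INR k) n * (s + INR (S n))).
  apply Rmult_lt_0_compat; auto. pose proof (pos_INR (S n)). lra.
Qed.

Lemma exp_neg_ln x : 0 < x -> exp (- ln x) = / x.
Proof. intro. rewrite exp_Ropp, exp_ln; auto. Qed.

Lemma gamma_ratio s n : 0 < s ->
  INR (fact (S n)) / prod_f_R0 (fun k => s + INR k) (S n)
  = exp (- ln s - sum_f_R0 (fun k => ln (1 + s / (INR k + 1))) n).
Proof.
  intro hs. induction n as [|n IHn].
  - simpl. unfold Rminus. rewrite exp_plus, exp_neg_ln by lra.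
    rewrite <- ln_Rinv by lra. rewrite exp_ln by (apply Rinv_0_lt_compat; lra).
    field. lra.
  - replace (fact (S (S n))) with (S (S n) * fact (S n))%nat by reflexivity.
    rewrite mult_INR.
    change (prod_f_R0 (fun k => s + INR k) (S (S n))) with
      (prod_f_R0 (fun k => s + INR k) (S n) * (s + INR (S (S n)))).
    change (sum_f_R0 (fun k => ln (1 + s / (INR k + 1))) (S n)) with
      (sum_f_R0 (fun k => ln (1 + s / (INR k + 1))) n + ln (1 + s / (INR (S n) + 1))).
    unfold Rminus. rewrite Ropp_plus_distr, <- Rplus_assoc, exp_plus.
    fold (- ln s - sum_f_R0 (fun k => ln (1 + s / (INR k + 1))) n). rewrite <- IHn.
    pose proof (pos_INR n). pose proof (prod_pos s (S n) hs).
    rewrite exp_neg_ln.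
    2:{ apply Rplus_lt_0_compat; [lra|]. apply Rdiv_lt_0_compat; [lra|rewrite S_INR; lra]. }
    rewrite !S_INR. field. repeat split; lra.
Qed.

Lemma euler_seq_cv s : 0 < s ->
  exists l, Un_cv (fun n => s * ln (INR n + 2)
                           - sum_f_R0 (fun k => ln (1 + s / (INR k + 1))) n) l.
Proof.
  intro hs. apply cv_of_incr with (C := s + s^2). intro n.
  pose proof (pos_INR n).
  change (sum_f_R0 (fun k => ln (1 + s / (INR k + 1))) (S n)) with
    (sum_f_R0 (fun k => ln (1 + s / (INR k + 1))) n + ln (1 + s / (INR (S n) + 1))).
  set (x := / (INR n + 2)).
  assert (hx : 0 < x) by (apply Rinv_0_lt_compat; lra).
  assert (E1 : ln (INR (S n) + 2) = ln (INR n + 2) + ln (1 + x)).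
  { rewrite <- ln_mult by lra. f_equal. rewrite S_INR. unfold x. field. lra. }
  assert (E2 : s / (INR (S n) + 1) = s * x) by (rewrite S_INR; unfold x, Rdiv; f_equal; f_equal; ring).
  rewrite E1, E2.
  pose proof (ln_1plus_bounds x ltac:(lra)). pose proof (ln_1plus_bounds (s*x) ltac:(nra)).
  assert (x^2 <= / ((INR n + 1) * (INR n + 2))).
  { unfold x. rewrite pow_inv. apply Rinv_le_contravar; nra. }
  assert (s * x^2 <= s * / ((INR n + 1) * (INR n + 2))) by (apply Rmult_le_compat_l; lra).
  assert (s^2 * x^2 <= s^2 * / ((INR n + 1) * (INR n + 2))) by (apply Rmult_le_compat_l; nra).
  unfold Rdiv. apply Rabs_le. split; nra.
Qed.

Lemma Gamma_pos s : 0 < s -> 0 < Gamma s.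
Proof.
  intro hs. destruct (euler_seq_cv s hs) as [l Hl].
  set (V := fun n => s * ln (INR n + 2)
                     - sum_f_R0 (fun k => ln (1 + s / (INR k + 1))) n) in Hl.
  assert (Hshift : Un_cv (fun n => INR (fact (S n)) * Rpower (INR (S n)) s
                    / prod_f_R0 (fun k => s + INR k) (S n)) (exp (l - s * 0 - ln s))).
  { apply (Un_cv_ext (fun n => exp (V n - s * ln (1 + / (INR n + 1)) - ln s))).
    - intro n. pose proof (pos_INR n).
      replace (INR (fact (S n)) * Rpower (INR (S n)) s / prod_f_R0 (fun k => s + INR k) (S n))
        with (Rpower (INR (S n)) s * (INR (fact (S n)) / prod_f_R0 (fun k => s + INR k) (S n)))
        by (unfold Rdiv; ring).
      rewrite gamma_ratio by auto. unfold Rpower. rewrite <- exp_plus. f_equal.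
      assert (hinv : 0 < / (INR n + 1)) by (apply Rinv_0_lt_compat; lra).
      assert (E : ln (INR n + 2) = ln (INR (S n)) + ln (1 + / (INR n + 1))).
      { rewrite S_INR, <- ln_mult by lra. f_equal. field. lra. }
      unfold V. rewrite E. ring.
    - apply continuity_seq; [apply derivable_continuous_pt; exists (exp (l - s*0 - ln s));
        apply derivable_pt_lim_exp|].
      apply CV_minus; [|apply Un_cv_const].
      apply CV_minus; [exact Hl|].
      apply (CV_mult (fun _ => s)); [apply Un_cv_const|].
      rewrite <- ln_1. apply continuity_seq.
      + apply derivable_continuous_pt. exists (/ 1). apply derivable_pt_lim_ln. lra.
      + assert (H1 := CV_plus (fun _ => 1) _ 1 0 (Un_cv_const 1) inv_cv0).
        rewrite Rplus_0_r in H1. exact H1. }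
  assert (Hcv : Un_cv (fun n => INR (fact n) * Rpower (INR n) s
                    / prod_f_R0 (fun k => s + INR k) n) (exp (l - s * 0 - ln s))).
  { intros eps he. destruct (Hshift eps he) as [N HN]. exists (S N). intros n hn.
    destruct n; [lia|]. apply HN. lia. }
  unfold Gamma. rewrite (lim_seq_eq _ _ Hcv). apply exp_pos.
Qed.

Lemma PI_gt3 : 3 < PI.
Proof. pose proof PI2_3_2. lra. Qed.

Lemma C_nu_pos nu : 0 < nu -> 0 < C_nu nu.
Proof.
  intro h. unfold C_nu. apply Rdiv_lt_0_compat; [apply Gamma_pos; lra|].
  apply Rmult_lt_0_compat; [apply sqrt_lt_R0, PI_RGT_0|apply Gamma_pos; lra].
Qed.

Lemma gstar_pos nu alpha w : 0 < nu -> 0 < gstar nu alpha w.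
Proof.
  intro. unfold gstar. pose proof (C_nu_pos nu H).
  pose proof (Rpower_pos alpha (2 * nu)). pose proof (Rpower_pos (alpha^2 + w^2) (- (nu + /2))).
  apply Rmult_lt_0_compat; [apply Rmult_lt_0_compat|]; auto.
Qed.

Lemma gstar_bound nu alpha w : / 2 <= nu -> 1 <= w^2 ->
  gstar nu alpha w <= C_nu nu * Rpower alpha (2*nu) / w^2.
Proof.
  intros hnu hw. unfold gstar. pose proof (C_nu_pos nu ltac:(lra)).
  pose proof (Rpower_pos alpha (2*nu)).
  unfold Rdiv. apply Rmult_le_compat_l; [nra|].
  rewrite Rpower_Ropp. apply Rinv_le_contravar; [lra|].
  assert (0 <= alpha^2) by nra.
  apply Rle_trans with (Rpower (alpha^2 + w^2) 1).
  - rewrite Rpower_1 by lra. lra.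
  - apply Rle_Rpower; lra.
Qed.

Lemma gstar_cont nu alpha w : 0 < alpha -> continuity_pt (gstar nu alpha) w.
Proof.
  intro ha. unfold gstar. apply cont_mult; [apply cont_const|].
  apply (cont_Rpower (fun w => alpha^2 + w^2)); [|nra].
  apply cont_plus; [apply cont_const|apply cont_pow2, cont_id].
Qed.

Definition gterm nu alpha lambda k :=
  match k with
  | O => gstar nu alpha lambda
  | _ => gstar nu alpha (lambda + 2 * INR k * PI) + gstar nu alpha (lambda - 2 * INR k * PI)
  end.

Lemma gterm_bound nu alpha lambda n : / 2 <= nu -> Rabs lambda <= 3 * PI / 2 ->
  0 <= gterm nu alpha lambda (S n)
    <= 4 * (C_nu nu * Rpower alpha (2*nu)) / ((INR n + 1) * (INR n + 2)).
Proof.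
  intros hnu hl. change (gterm nu alpha lambda (S n)) with
    (gstar nu alpha (lambda + 2 * INR (S n) * PI) + gstar nu alpha (lambda - 2 * INR (S n) * PI)).
  set (B := C_nu nu * Rpower alpha (2*nu)).
  assert (HB : 0 < B) by (apply Rmult_lt_0_compat; [apply C_nu_pos; lra|apply Rpower_pos]).
  pose proof (pos_INR n) as hn. pose proof PI_gt3.
  apply Rabs_le_split in hl.
  assert (Hk : forall w, INR n + 1 <= Rabs w -> gstar nu alpha w <= B / (INR n + 1)^2).
  { intros w hw. pose proof (pow2_abs w). pose proof (Rabs_pos w).
    eapply Rle_trans; [apply gstar_bound; auto; nra|].
    unfold Rdiv. apply Rmult_le_compat_l; [lra|]. apply Rinv_le_contravar; nra. }
  rewrite S_INR.
  assert (h1 : INR n + 1 <= Rabs (lambda + 2 * (INR n + 1) * PI)) by (rewrite Rabs_right; nra).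
  assert (h2 : INR n + 1 <= Rabs (lambda - 2 * (INR n + 1) * PI)) by (rewrite Rabs_left1; nra).
  pose proof (Hk _ h1). pose proof (Hk _ h2).
  pose proof (gstar_pos nu alpha (lambda + 2 * (INR n + 1) * PI) ltac:(lra)).
  pose proof (gstar_pos nu alpha (lambda - 2 * (INR n + 1) * PI) ltac:(lra)).
  assert (B / (INR n + 1)^2 <= 2 * B / ((INR n + 1) * (INR n + 2))).
  { unfold Rdiv. apply Rmult_le_reg_r with ((INR n + 1)^2 * (INR n + 2)); [nra|].
    field_simplify; nra. }
  lra.
Qed.

Lemma gdelta_tail nu delta theta lambda : / 2 <= nu -> Rabs lambda <= 3 * PI / 2 ->
  forall n, 0 <= gdelta nu delta theta lambda - sum_f_R0 (gterm nu (delta*theta) lambda) n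
    <= 4 * (C_nu nu * Rpower (delta*theta) (2*nu)) / (INR n + 1).
Proof.
  intros hnu hl. apply (tail_bound (fun N => sum_f_R0 (gterm nu (delta*theta) lambda) N)).
  intro n. change (sum_f_R0 (gterm nu (delta * theta) lambda) (S n)) with
    (sum_f_R0 (gterm nu (delta * theta) lambda) n + gterm nu (delta*theta) lambda (S n)).
  pose proof (gterm_bound nu (delta*theta) lambda n hnu hl). lra.
Qed.

Lemma gdelta_bounds nu delta theta lambda : / 2 <= nu -> Rabs lambda <= 3 * PI / 2 ->
  gstar nu (delta*theta) lambda <= gdelta nu delta theta lambda
    <= gstar nu (delta*theta) lambda + 4 * (C_nu nu * Rpower (delta*theta) (2*nu)).
Proof.
  intros hnu hl. pose proof (gdelta_tail nu delta theta lambda hnu hl 0%nat) as H.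
  simpl in H. lra.
Qed.

Lemma partial_sum_cont nu alpha n y : 0 < alpha ->
  continuity_pt (fun l => sum_f_R0 (gterm nu alpha l) n) y.
Proof.
  intro ha. induction n as [|n IH]; [apply gstar_cont; auto|].
  change (continuity_pt (fun l => sum_f_R0 (gterm nu alpha l) n + gterm nu alpha l (S n)) y).
  apply cont_plus; auto. unfold gterm.
  apply cont_plus; apply (cont_comp (gstar nu alpha)); try apply gstar_cont; auto.
  - apply cont_plus; [apply cont_id|apply cont_const].
  - apply cont_minus; [apply cont_id|apply cont_const].
Qed.

(* gdelta is continuous on [-pi,pi], as a uniform limit of continuous partial sums. *)
Lemma gdelta_cont nu delta theta lambda : / 2 <= nu -> 0 < delta * theta ->
  Rabs lambda <= PI -> continuity_pt (gdelta nu delta theta) lambda.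
Proof.
  intros hnu ha hl. pose proof PI_gt3.
  assert (hr : 0 < 3 * PI / 2) by lra.
  apply (CVU_continuity (fun n l => sum_f_R0 (gterm nu (delta*theta) l) n) _ 0 (mkposreal _ hr)).
  - intros eps he.
    set (B := 4 * (C_nu nu * Rpower (delta*theta) (2*nu))).
    destruct (inv_cv0 (eps / (B + 1))) as [N HN].
    { apply Rdiv_lt_0_compat; [lra|]. pose proof (C_nu_pos nu ltac:(lra)).
      pose proof (Rpower_pos (delta*theta) (2*nu)). unfold B; nra. }
    exists N. intros n y hn hy. unfold Boule in hy; simpl in hy. rewrite Rminus_0_r in hy.
    pose proof (gdelta_tail nu delta theta y hnu ltac:(lra) n) as Ht. fold B in Ht.
    specialize (HN n hn). unfold Rdist in HN. rewrite Rminus_0_r in HN.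
    assert (hB : 0 <= B).
    { pose proof (C_nu_pos nu ltac:(lra)). pose proof (Rpower_pos (delta*theta) (2*nu)).
      unfold B; nra. }
    assert (hi : 0 < / (INR n + 1)) by (apply Rinv_0_lt_compat; pose proof (pos_INR n); lra).
    rewrite Rabs_right in HN by lra. rewrite Rabs_right by lra.
    assert (B * / (INR n + 1) <= (B + 1) * / (INR n + 1)) by nra.
    assert ((B + 1) * / (INR n + 1) < eps).
    { apply Rmult_lt_reg_l with (/ (B + 1)); [apply Rinv_0_lt_compat; lra|].
      rewrite <- Rmult_assoc, Rinv_l by lra. unfold Rdiv in HN. nra. }
    unfold Rdiv in Ht. lra.
  - intros. apply partial_sum_cont; auto.
  - unfold Boule; simpl. rewrite Rminus_0_r. lra.
Qed.

Lemma adelta_cont nu b delta theta lambda : / 2 <= nu -> 0 < b -> 0 < delta * theta ->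
  Rabs lambda <= PI -> continuity_pt (adelta nu b delta theta) lambda.
Proof.
  intros hnu hb ha hl. pose proof PI_RGT_0.
  assert (cg : continuity_pt (fun l => b * gdelta nu delta theta l) lambda).
  { apply cont_mult; [apply cont_const|apply gdelta_cont; auto]. }
  unfold adelta, Rdiv.
  apply (cont_mult (fun l => b * gdelta nu delta theta l)); auto.
  apply (cont_inv (fun l => b * gdelta nu delta theta l + / (2 * PI))).
  - apply cont_plus; auto. apply cont_const.
  - pose proof (gdelta_bounds nu delta theta lambda hnu ltac:(lra)).
    pose proof (gstar_pos nu (delta*theta) lambda ltac:(lra)).
    assert (0 < / (2*PI)) by (apply Rinv_0_lt_compat; lra). nra.
Qed.

Lemma rpow_nonneg x y : 0 <= rpow x y.
Proof. unfold rpow. destruct Req_EM_T; [lra|left; apply Rpower_pos]. Qed.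

(* x |-> |x|^p is continuous for p > 0, including at 0 thanks to 0^p = 0. *)
Lemma rpow_abs_cont p x : 0 < p -> continuity_pt (fun x => rpow (Rabs x) p) x.
Proof.
  intro hp. destruct (Req_dec x 0) as [->|hx].
  - intros eps he. exists (Rpower eps (/ p)). split; [apply Rpower_pos|].
    intros y [_ hy]. simpl in hy |- *. unfold R_dist, Rdist in *.
    rewrite Rminus_0_r in hy. rewrite Rabs_R0.
    unfold rpow at 2. destruct Req_EM_T; [|lra]. rewrite Rminus_0_r.
    unfold rpow. destruct Req_EM_T as [e0|ne]; [rewrite Rabs_R0; lra|].
    rewrite Rabs_right by (left; apply Rpower_pos).
    assert (h0 : 0 < Rabs y) by (pose proof (Rabs_pos y); lra).
    pose proof (Rlt_Rpower_l (Rabs y) (Rpower eps (/ p)) p hp (conj h0 hy)) as h.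
    rewrite Rpower_mult, Rinv_l, Rpower_1 in h by lra. exact h.
  - apply (continuity_pt_locally_ext (fun y => Rpower (Rabs y) p) _ (Rabs x)).
    + apply Rabs_pos_lt; auto.
    + intros y hy. unfold rpow. destruct Req_EM_T as [e|]; auto.
      exfalso. assert (y = 0) by (destruct (Req_dec y 0) as [|ny]; auto;
        pose proof (Rabs_pos_lt y ny); lra).
      subst y. unfold Rdist in hy.
      rewrite Rminus_0_l, Rabs_Ropp in hy. lra.
    + apply (cont_Rpower Rabs); [apply Rcontinuity_abs|apply Rabs_pos_lt; auto].
Qed.

Definition profile (p x : R) : R := / (1 + rpow (Rabs x) p).

Lemma profile_cont p x : 0 < p -> continuity_pt (profile p) x.
Proof.
  intro hp. unfold profile. apply cont_inv.
  - apply cont_plus; [apply cont_const|apply rpow_abs_cont; auto].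
  - pose proof (rpow_nonneg (Rabs x) p). lra.
Qed.

Lemma profile_range p x : 0 < profile p x <= 1.
Proof.
  unfold profile. pose proof (rpow_nonneg (Rabs x) p). split.
  - apply Rinv_0_lt_compat; lra.
  - rewrite <- Rinv_1. apply Rinv_le_contravar; lra.
Qed.

Lemma Rpower_le1 x y : 0 < x <= 1 -> 0 <= y -> Rpower x y <= 1.
Proof.
  intros hx hy. unfold Rpower. rewrite <- exp_0.
  assert (ln x <= 0) by (rewrite <- ln_1; apply ln_le; lra).
  destruct (Rle_lt_or_eq_dec (y * ln x) 0) as [h|h]; [nra|left; apply exp_increasing; auto|].
  rewrite h; lra.
Qed.

Lemma profile_half p x : 0 < p -> Rabs x <= 1 -> / 2 <= profile p x.
Proof.
  intros hp hx. unfold profile. apply Rinv_le_contravar; [pose proof (rpow_nonneg (Rabs x) p); lra|].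
  unfold rpow. destruct Req_EM_T; [lra|].
  pose proof (Rpower_le1 (Rabs x) p ltac:(pose proof (Rabs_pos x); lra) ltac:(lra)). lra.
Qed.

Lemma profile_le_cauchy p x : 2 <= p -> profile p x <= 2 / (1 + x^2).
Proof.
  intro hp. pose proof (profile_range p x). destruct (Rle_dec (Rabs x) 1) as [h|h].
  - pose proof (pow2_abs x). pose proof (Rabs_pos x).
    apply Rle_trans with 1; [lra|]. apply Rmult_le_reg_r with (1 + x^2); [nra|].
    unfold Rdiv. rewrite Rmult_assoc, Rinv_l by nra. nra.
  - unfold profile, rpow. destruct Req_EM_T; [lra|].
    assert (x^2 <= Rpower (Rabs x) p).
    { rewrite <- pow2_abs, <- Rpower_pow by lra. apply Rle_Rpower; [lra|simpl; lra]. }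
    unfold Rdiv. rewrite <- (Rmult_1_l (/ (1 + Rpower _ _))).
    pose proof (Rpower_pos (Rabs x) p).
    apply Rmult_le_compat; try lra; [left; apply Rinv_0_lt_compat; lra|].
    apply Rinv_le_contravar; nra.
Qed.

Lemma cauchy_cont x : continuity_pt (fun x => 2 / (1 + x^2)) x.
Proof.
  apply cont_mult; [apply cont_const|]. apply cont_inv; [|nra].
  apply cont_plus; [apply cont_const|apply cont_pow2, cont_id].
Qed.

Lemma Rint_cauchy a b : a <= b -> Rint (fun x => 2 / (1 + x^2)) a b = 2 * atan b - 2 * atan a.
Proof.
  intro hab. apply (Rint_antideriv _ (fun x => 2 * atan x)); auto.
  - apply cauchy_cont.
  - intro x. apply (derivable_pt_lim_scal atan 2 x). apply derivable_pt_lim_atan.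
Qed.

Lemma nat_above x : exists n : nat, x <= INR n.
Proof.
  destruct (archimed x) as [h _]. destruct (Rle_dec x 0); [exists 0%nat; simpl; lra|].
  destruct (IZN (up x)) as [N HN]; [apply le_IZR; lra|].
  exists N. rewrite HN, <- INR_IZR_INZ in h. lra.
Qed.

Lemma Rint_mono_interval psi a b c d : (forall x, continuity_pt psi x) ->
  (forall x, 0 <= psi x) -> a <= c -> c <= d -> d <= b -> Rint psi c d <= Rint psi a b.
Proof.
  intros hc hp h1 h2 h3.
  assert (Hpos : forall a b, a <= b -> 0 <= Rint psi a b).
  { intros u v huv. replace 0 with (Rint (fun _ => 0) u v) by (rewrite Rint_const; ring).
    apply Rint_le_cont; auto. intro; apply cont_const. }
  rewrite <- (Rint_chasles psi a c b), <- (Rint_chasles psi c d b) by (auto; lra).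
  pose proof (Hpos a c h1). pose proof (Hpos d b h3). lra.
Qed.

(* A continuous function with 0 <= psi <= 2/(1+x^2) has an improper integral
   over R: the integrals over [-n,n] increase and are bounded by 2 pi. *)
Lemma improper_exists (psi : R -> R) :
  (forall x, continuity_pt psi x) -> (forall x, 0 <= psi x <= 2 / (1 + x^2)) ->
  exists l, improper_integral_R psi l.
Proof.
  intros hc hb.
  assert (hp : forall x, 0 <= psi x) by (intro; apply hb).
  pose (u := fun n : nat => Rint psi (- INR n) (INR n)).
  assert (Hg : Un_growing u).
  { intro n. unfold u. rewrite S_INR. pose proof (pos_INR n).
    apply Rint_mono_interval; auto; lra. }
  assert (Hub : has_ub u).
  { exists (2 * PI). intros x [n ->]. unfold u. pose proof (pos_INR n).
    apply Rle_trans with (Rint (fun x => 2 / (1 + x^2)) (- INR n) (INR n)).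
    - apply Rint_le_cont; auto; [apply cauchy_cont|lra|intros; apply hb].
    - rewrite Rint_cauchy by lra.
      pose proof (atan_bound (INR n)). pose proof (atan_bound (- INR n)). lra. }
  destruct (growing_cv u Hg Hub) as [l Hl]. exists l.
  intros eps he. destruct (Hl eps he) as [N HN]. exists (INR N).
  intros a b ha hb'. pose proof (pos_INR N).
  split; [constructor; apply integrable_cont; auto; lra|].
  specialize (HN N (le_n N)). unfold Rdist in HN. pose proof (growing_ineq u l Hg Hl N).
  rewrite Rabs_left1 in HN by lra.
  destruct (nat_above (Rmax (- a) b)) as [K HK].
  pose proof (Rmax_l (-a) b). pose proof (Rmax_r (-a) b).
  pose proof (growing_ineq u l Hg Hl K).
  assert (u N <= Rint psi a b) by (unfold u; apply Rint_mono_interval; auto; lra).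
  assert (Rint psi a b <= u K) by (unfold u; apply Rint_mono_interval; auto; lra).
  rewrite Rabs_left1; lra.
Qed.

Lemma integral_R_spec psi : (exists l, improper_integral_R psi l) ->
  improper_integral_R psi (integral_R psi).
Proof.
  intro H. unfold integral_R. destruct excluded_middle_informative as [H1|H1].
  - destruct (constructive_indefinite_description _ H1) as [l Hl]. exact Hl.
  - contradiction.
Qed.

Lemma improper_integral_pos psi m l : (forall x, continuity_pt psi x) ->
  (forall x, 0 <= psi x) -> 0 < m -> (forall x, Rabs x <= 1 -> m <= psi x) ->
  improper_integral_R psi l -> 0 < l.
Proof.
  intros hc hp hm hm1 Hl.
  destruct (Hl m hm) as [M HM].
  set (T := Rmax M 1 + 1).
  assert (hT : M < T /\ 2 <= T) by (unfold T; pose proof (Rmax_l M 1); pose proof (Rmax_r M 1); lra).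
  destruct (HM (- T) T ltac:(lra) ltac:(lra)) as [_ HM2].
  assert (2 * m <= Rint psi (-1) 1).
  { replace (2 * m) with (Rint (fun _ => m) (-1) 1) by (rewrite Rint_const; ring).
    apply Rint_le_cont; auto; [intro; apply cont_const|lra|].
    intros x hx. apply hm1, Rabs_le; lra. }
  pose proof (Rint_mono_interval psi (- T) T (-1) 1 hc hp ltac:(lra) ltac:(lra) ltac:(lra)).
  apply Rabs_def2 in HM2. lra.
Qed.

(* The smoothed profile 1/(1 + (e^2 + x^2)^q); with q = p/2 it tends to
   profile p as e -> 0. *)
Definition sprofile (q e x : R) : R := / (1 + Rpower (e^2 + x^2) q).

Lemma Rpower_sq L q : 0 < L -> Rpower (L^2) q = Rpower L (2*q).
Proof.
  intro. rewrite <- Rpower_mult. f_equal.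
  replace 2%R with (INR 2) by (simpl; ring). rewrite Rpower_pow by auto. reflexivity.
Qed.

Lemma Rpower_Rinv x y : 0 < x -> Rpower (/ x) y = / Rpower x y.
Proof.
  intro. unfold Rpower. rewrite ln_Rinv by auto.
  replace (y * - ln x) with (- (y * ln x)) by ring. apply exp_Ropp.
Qed.

Lemma gstar_ratio_rescaled nu b alpha L lambda : / 2 <= nu -> 0 < b -> 0 < alpha -> 0 < L ->
  Rpower L (2*nu+1) = 2*PI*C_nu nu*b * Rpower alpha (2*nu) ->
  b * gstar nu alpha lambda / (b * gstar nu alpha lambda + / (2*PI))
  = sprofile (nu + /2) (alpha / L) (/ L * lambda + 0).
Proof.
  intros hnu hb ha hL hLp. unfold sprofile, gstar.
  pose proof PI_RGT_0. pose proof (C_nu_pos nu ltac:(lra)) as hC.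
  set (A := Rpower alpha (2*nu)) in *. set (C := C_nu nu) in *.
  assert (hA : 0 < A) by apply Rpower_pos.
  assert (hs : 0 < alpha^2 + lambda^2) by nra.
  set (T := Rpower (alpha^2 + lambda^2) (nu + /2)).
  assert (hT : 0 < T) by apply Rpower_pos.
  rewrite Rpower_Ropp. fold T.
  replace ((alpha / L)^2 + (/ L * lambda + 0)^2) with ((alpha^2 + lambda^2) * / (L^2))
    by (field; lra).
  rewrite <- Rpower_mult_distr; [fold T|lra|apply Rinv_0_lt_compat; nra].
  assert (E : Rpower (/ L^2) (nu + /2) = / Rpower L (2*nu+1)).
  { rewrite Rpower_Rinv, Rpower_sq by nra. do 2 f_equal. field. }
  rewrite E, hLp.
  assert (0 < 2*PI*C*b*A) by (apply Rmult_lt_0_compat; [apply Rmult_lt_0_compat; [apply Rmult_lt_0_compat|]|]; lra).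
  field. repeat split; lra.
Qed.

(* The functions phi applied to a^delta: continuous, nondecreasing and
   2-Lipschitz on [0,1], with 0 <= phi y <= y there and phi(1/2) > 0.  Both
   phi(y) = y and phi(y) = y^2 qualify. *)
Record admissible (phi : R -> R) : Prop := {
  adm_cont : forall y, continuity_pt phi y;
  adm_mono : forall y z, 0 <= z -> z <= y -> y <= 1 -> phi z <= phi y;
  adm_lip : forall y z, 0 <= z -> z <= y -> y <= 1 -> phi y - phi z <= 2 * (y - z);
  adm_range : forall y, 0 <= y <= 1 -> 0 <= phi y <= y;
  adm_half : 0 < phi (/ 2)
}.

Lemma ratio_increment_bounds y r k : 0 < k -> 0 <= y -> 0 <= r ->
  0 <= y / (y + k) <= 1 /\ y / (y + k) <= (y + r) / (y + r + k) <= y / (y + k) + r / k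
  /\ (y + r) / (y + r + k) <= 1.
Proof.
  intros hk hy hr.
  assert (E : (y + r) / (y + r + k) - y / (y + k) = r * k / ((y + r + k) * (y + k)))
    by (field; lra).
  assert (0 <= r * k / ((y + r + k) * (y + k)))
    by (apply Rmult_le_pos; [nra|left; apply Rinv_0_lt_compat; nra]).
  assert (r * k / ((y + r + k) * (y + k)) <= r / k).
  { replace (r / k) with (r * k / (k * k)) by (field; lra).
    unfold Rdiv. apply Rmult_le_compat_l; [nra|]. apply Rinv_le_contravar; nra. }
  assert (y / (y + k) <= 1) by (apply Rmult_le_reg_r with (y + k); [lra|field_simplify; lra]).
  assert ((y + r) / (y + r + k) <= 1)
    by (apply Rmult_le_reg_r with (y + r + k); [lra|field_simplify; lra]).
  assert (0 <= y / (y + k)) by (apply Rmult_le_pos; [lra|left; apply Rinv_0_lt_compat; lra]).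
  lra.
Qed.

Lemma sprofile_range q e x : 0 < sprofile q e x <= 1.
Proof.
  unfold sprofile. pose proof (Rpower_pos (e^2 + x^2) q). split.
  - apply Rinv_0_lt_compat; lra.
  - rewrite <- Rinv_1. apply Rinv_le_contravar; lra.
Qed.

Lemma sprofile_cont q e x : 0 < e -> continuity_pt (sprofile q e) x.
Proof.
  intro he. unfold sprofile. apply cont_inv.
  - apply cont_plus; [apply cont_const|].
    apply (cont_Rpower (fun x => e^2 + x^2)); [|nra].
    apply cont_plus; [apply cont_const|apply cont_pow2, cont_id].
  - pose proof (Rpower_pos (e^2 + x^2) q). lra.
Qed.

Lemma sprofile_le_profile q e x : 0 < q -> 0 < e -> sprofile q e x <= profile (2*q) x.
Proof.
  intros hq he. unfold sprofile, profile. apply Rinv_le_contravar.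
  { pose proof (rpow_nonneg (Rabs x) (2*q)); lra. }
  apply Rplus_le_compat_l. unfold rpow. destruct Req_EM_T as [e0|ne]; [left; apply Rpower_pos|].
  assert (hx : 0 < Rabs x) by (pose proof (Rabs_pos x); lra).
  rewrite <- Rpower_sq, pow2_abs by lra. apply Rle_Rpower_l; [lra|].
  pose proof (pow2_abs x). split; nra.
Qed.

Lemma profile_shift_le_sprofile q e x : 0 < q -> 0 < e ->
  profile (2*q) (Rabs x + e) <= sprofile q e x.
Proof.
  intros hq he. unfold sprofile, profile. apply Rinv_le_contravar.
  { pose proof (Rpower_pos (e^2 + x^2) q); lra. }
  apply Rplus_le_compat_l. pose proof (Rabs_pos x).
  rewrite (Rabs_right (Rabs x + e)) by lra.
  unfold rpow. destruct Req_EM_T; [lra|].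
  rewrite <- Rpower_sq by lra. apply Rle_Rpower_l; [lra|].
  pose proof (pow2_abs x). split; nra.
Qed.

Section Comparison.

Variable phi : R -> R.
Hypothesis hphi : admissible phi.

Lemma phi_profile_cont p x : 0 < p -> continuity_pt (fun x => phi (profile p x)) x.
Proof.
  intro hp. apply (cont_comp phi (profile p)); [apply profile_cont; auto|apply (adm_cont _ hphi)].
Qed.

Lemma phi_profile_unit p x : 0 <= phi (profile p x) <= 1.
Proof. pose proof (profile_range p x). pose proof (adm_range _ hphi (profile p x)). lra. Qed.

Lemma sprofile_integral_bounds q e M : 0 < q -> 0 < e -> 0 <= M ->
  Rint (fun x => phi (profile (2*q) x)) (-M) M - 2 * e
    <= Rint (fun x => phi (sprofile q e x)) (-M) M
    <= Rint (fun x => phi (profile (2*q) x)) (-M) M.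
Proof.
  intros hq he hM.
  set (psi := fun x => phi (profile (2*q) x)).
  set (Phi := fun x => phi (sprofile q e x)).
  assert (cpsi : forall x, continuity_pt psi x) by (intro; apply phi_profile_cont; lra).
  assert (cPhi : forall x, continuity_pt Phi x).
  { intro x. apply (cont_comp phi (sprofile q e)); [apply sprofile_cont; lra|apply (adm_cont _ hphi)]. }
  assert (psi01 : forall x, 0 <= psi x <= 1) by (intro; apply phi_profile_unit).
  assert (cshift : forall v x, continuity_pt (fun x => psi (1 * x + v)) x).
  { intros v x. apply (cont_comp psi (fun x => 1*x+v)); [apply cont_affine|apply cpsi]. }
  assert (below : forall x, profile (2*q) (Rabs x + e) <= sprofile q e x -> psi (Rabs x + e) <= Phi x).
  { intros x h. apply (adm_mono _ hphi); try lra.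
    - pose proof (profile_range (2*q) (Rabs x + e)). lra.
    - pose proof (sprofile_range q e x). lra. }
  split.
  - rewrite <- (Rint_chasles Phi (-M) 0 M), <- (Rint_chasles psi (-M) 0 M) by (auto; lra).
    pose proof (Rint_shift_ge psi e 0 M cpsi psi01 hM) as h1.
    pose proof (Rint_shift_ge psi (- e) (-M) 0 cpsi psi01 ltac:(lra)) as h2.
    rewrite Rabs_right in h1 by lra. rewrite Rabs_Ropp, Rabs_right in h2 by lra.
    assert (Rint (fun x => psi (1 * x + e)) 0 M <= Rint Phi 0 M).
    { apply Rint_le_cont; auto. intros x hx.
      replace (1 * x + e) with (Rabs x + e) by (rewrite Rabs_right by lra; ring).
      apply below, profile_shift_le_sprofile; lra. }
    assert (Rint (fun x => psi (1 * x + - e)) (-M) 0 <= Rint Phi (-M) 0).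
    { apply Rint_le_cont; auto; [lra|]. intros x hx.
      assert (E : psi (1 * x + - e) = psi (Rabs x + e)).
      { unfold psi, profile. rewrite (Rabs_left x), <- Rabs_Ropp by lra. do 5 f_equal. ring. }
      rewrite E. apply below, profile_shift_le_sprofile; lra. }
    lra.
  - apply Rint_le_cont; auto; [lra|]. intros x _. apply (adm_mono _ hphi).
    + pose proof (sprofile_range q e x). lra.
    + apply sprofile_le_profile; lra.
    + pose proof (profile_range (2*q) x). lra.
Qed.

Variables nu b delta theta L : R.
Hypothesis hnu : / 2 <= nu.
Hypothesis hb : 0 < b.
Hypothesis halpha : 0 < delta * theta.
Hypothesis hL : 0 < L.
Hypothesis hLp : Rpower L (2*nu+1) = 2*PI*C_nu nu*b * Rpower (delta*theta) (2*nu).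

(* Pointwise comparison on [-pi,pi]: phi(a^delta) is the rescaled smoothed
   profile up to an additive error 8 L^(2nu+1) coming from periodization. *)
Lemma adelta_pointwise lambda : Rabs lambda <= PI ->
  let S := phi (sprofile (nu + /2) (delta * theta / L) (/ L * lambda + 0)) in
  S <= phi (adelta nu b delta theta lambda) <= S + 8 * Rpower L (2*nu+1).
Proof.
  intros hl S. pose proof PI_gt3.
  pose proof (gdelta_bounds nu delta theta lambda hnu ltac:(lra)) as hg.
  pose proof (gstar_pos nu (delta * theta) lambda ltac:(lra)).
  set (y := b * gstar nu (delta * theta) lambda).
  set (r := b * (gdelta nu delta theta lambda - gstar nu (delta * theta) lambda)).
  assert (hk : 0 < / (2 * PI)) by (apply Rinv_0_lt_compat; lra).
  assert (hy : 0 <= y) by (unfold y; nra).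
  assert (hr : 0 <= r) by (unfold r; nra).
  destruct (ratio_increment_bounds y r (/ (2*PI)) hk hy hr) as [h1 [h2 h3]].
  assert (Ea : adelta nu b delta theta lambda = (y + r) / (y + r + / (2*PI))).
  { unfold adelta, y, r. f_equal; ring. }
  assert (E0 : S = phi (y / (y + / (2*PI)))).
  { unfold S, y. f_equal. symmetry. apply gstar_ratio_rescaled; auto. }
  assert (hrk : r / / (2 * PI) <= 4 * Rpower L (2*nu+1)).
  { rewrite hLp. unfold Rdiv. rewrite Rinv_inv. unfold r.
    assert (0 < b * (2 * PI)) by (apply Rmult_lt_0_compat; lra).
    apply Rle_trans with ((4 * (C_nu nu * Rpower (delta * theta) (2 * nu))) * (b * (2 * PI)));
      [|right; ring].
    replace (b * (gdelta nu delta theta lambda - gstar nu (delta * theta) lambda) * (2 * PI))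
      with ((gdelta nu delta theta lambda - gstar nu (delta * theta) lambda) * (b * (2 * PI)))
      by ring.
    apply Rmult_le_compat_r; lra. }
  rewrite E0, Ea. split.
  - apply (adm_mono _ hphi); lra.
  - pose proof (adm_lip _ hphi ((y + r) / (y + r + / (2 * PI))) (y / (y + / (2 * PI)))). lra.
Qed.

Lemma adelta_integral_bounds :
  let J := Rint (fun x => phi (profile (2 * nu + 1) x)) (- (PI / L)) (PI / L) in
  L * (J - 2 * (delta * theta / L))
    <= Rint (fun l => phi (adelta nu b delta theta l)) (- PI) PI
    <= L * (J + 16 * PI * Rpower L (2 * nu)).
Proof.
  intros J. pose proof PI_RGT_0.
  set (e := delta * theta / L). set (q := nu + / 2).
  assert (he : 0 < e) by (unfold e; apply Rdiv_lt_0_compat; auto).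
  set (Phie := fun x => phi (sprofile q e x)).
  assert (cPhie : forall x, continuity_pt Phie x).
  { intro x. apply (cont_comp phi (sprofile q e)); [apply sprofile_cont; lra|apply (adm_cont _ hphi)]. }
  set (Phil := fun l => Phie (/ L * l + 0)).
  assert (cPhil : forall x, continuity_pt Phil x).
  { intro x. apply (cont_comp Phie (fun l => / L * l + 0)); [apply cont_affine|apply cPhie]. }
  assert (IPhil : Rint Phil (-PI) PI = L * Rint Phie (- (PI / L)) (PI / L)).
  { unfold Phil. rewrite Rint_affine by (auto; try apply Rinv_0_lt_compat; lra).
    rewrite Rinv_inv. f_equal. f_equal; unfold Rdiv; ring. }
  assert (Hpt : forall l, -PI <= l <= PI ->
     Phil l <= phi (adelta nu b delta theta l) <= Phil l + 8 * Rpower L (2*nu+1)).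
  { intros l hl. apply adelta_pointwise, Rabs_le; lra. }
  assert (Iad : Riemann_integrable (fun l => phi (adelta nu b delta theta l)) (-PI) PI).
  { apply continuity_implies_RiemannInt; [lra|]. intros x hx.
    apply (cont_comp phi (adelta nu b delta theta));
      [apply adelta_cont; auto; apply Rabs_le; lra|apply (adm_cont _ hphi)]. }
  pose proof (sprofile_integral_bounds q e (PI / L) ltac:(unfold q; lra) he
     ltac:(left; apply Rdiv_lt_0_compat; auto)) as hfe.
  replace (2 * q) with (2 * nu + 1) in hfe by (unfold q; field). fold J Phie in hfe.
  assert (hpow : Rpower L (2*nu+1) = Rpower L (2*nu) * L)
    by (rewrite Rpower_plus, Rpower_1 by auto; reflexivity).
  split.
  - apply Rle_trans with (Rint Phil (-PI) PI).
    + rewrite IPhil. apply Rmult_le_compat_l; lra.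
    + apply Rint_le; [lra|apply integrable_cont; auto; lra|auto|]. intros; apply Hpt; lra.
  - apply Rle_trans with (Rint (fun l => Phil l + 8 * Rpower L (2*nu+1)) (-PI) PI).
    + apply Rint_le; [lra|auto|apply integrable_cont; [lra|]|].
      * intro. apply cont_plus; [apply cPhil|apply cont_const].
      * intros; apply Hpt; lra.
    + rewrite Rint_plus_const by (apply integrable_cont; auto; lra). rewrite IPhil, hpow.
      assert (L * Rint Phie (- (PI / L)) (PI / L) <= L * J) by (apply Rmult_le_compat_l; lra).
      nra.
Qed.

End Comparison.

Definition lim_0plus (f : R -> R) (l : R) : Prop :=
  forall eps, 0 < eps -> exists eta, 0 < eta /\
    forall d, 0 < d < eta -> Rabs (f d - l) < eps.

Lemma lim_0plus_ext f g l : (forall d, 0 < d -> f d = g d) ->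
  lim_0plus f l -> lim_0plus g l.
Proof.
  intros E H eps he. destruct (H eps he) as [eta [heta Hd]].
  exists eta. split; auto. intros d hd. rewrite <- E by lra. auto.
Qed.

Lemma lim_0plus_scal c f : lim_0plus f 0 -> lim_0plus (fun d => c * f d) 0.
Proof.
  intros H eps he. pose proof (Rabs_pos c).
  destruct (H (eps / (Rabs c + 1))) as [eta [heta Hd]]; [apply Rdiv_lt_0_compat; lra|].
  exists eta. split; auto. intros d hd. specialize (Hd d hd).
  rewrite Rminus_0_r in *. rewrite Rabs_mult.
  apply Rle_lt_trans with ((Rabs c + 1) * Rabs (f d)); [pose proof (Rabs_pos (f d)); nra|].
  apply Rmult_lt_reg_l with (/ (Rabs c + 1)); [apply Rinv_0_lt_compat; lra|].
  rewrite <- Rmult_assoc, Rinv_l by lra. unfold Rdiv in Hd. lra.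
Qed.

Lemma lim_0plus_linear theta : lim_0plus (fun d => d * theta) 0.
Proof.
  apply (lim_0plus_ext (fun d => theta * d)); [intros; ring|].
  apply lim_0plus_scal. intros eps he. exists eps. split; auto.
  intros d hd. rewrite Rminus_0_r, Rabs_right; lra.
Qed.

Lemma lim_0plus_Rpower f y : (forall d, 0 < d -> 0 < f d) -> lim_0plus f 0 -> 0 < y ->
  lim_0plus (fun d => Rpower (f d) y) 0.
Proof.
  intros hpos H hy eps he.
  destruct (H (Rpower eps (/ y)) (Rpower_pos _ _)) as [eta [heta Hd]].
  exists eta. split; auto. intros d hd. specialize (Hd d hd). specialize (hpos d ltac:(lra)).
  rewrite Rminus_0_r in *. rewrite Rabs_right in * by (try left; try apply Rpower_pos; lra).
  pose proof (Rlt_Rpower_l (f d) (Rpower eps (/ y)) y hy (conj hpos Hd)) as h.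
  rewrite Rpower_mult, Rinv_l, Rpower_1 in h by lra. exact h.
Qed.

Lemma lim_0plus_window psi I L : improper_integral_R psi I ->
  (forall d, 0 < d -> 0 < L d) -> lim_0plus L 0 ->
  lim_0plus (fun d => Rint psi (- (PI / L d)) (PI / L d)) I.
Proof.
  intros HI hpos HL eps he. pose proof PI_RGT_0.
  destruct (HI eps he) as [M HM].
  set (M' := Rmax M 1). assert (hM : M <= M' /\ 1 <= M') by (split; [apply Rmax_l|apply Rmax_r]).
  destruct (HL (PI / M')) as [eta [heta Hd]]; [apply Rdiv_lt_0_compat; lra|].
  exists eta. split; auto. intros d hd. specialize (Hd d hd). specialize (hpos d ltac:(lra)).
  rewrite Rminus_0_r, Rabs_right in Hd by lra.
  assert (hw : M' < PI / L d).
  { apply Rmult_lt_reg_r with (L d); auto. unfold Rdiv. rewrite Rmult_assoc, Rinv_l by lra.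
    apply Rmult_lt_compat_r with (r := M') in Hd; [|lra].
    unfold Rdiv in Hd. rewrite Rmult_assoc, Rinv_l in Hd by lra. lra. }
  apply HM; lra.
Qed.

Lemma squeeze_equiv F L J E Rm I : 0 < I -> (forall d, 0 < d -> 0 < L d) ->
  lim_0plus J I -> lim_0plus E 0 -> lim_0plus Rm 0 ->
  (forall d, 0 < d -> L d * (J d - E d) <= F d <= L d * (J d + Rm d)) ->
  equiv_at_0plus F (fun d => L d * I).
Proof.
  intros hI hL HJ HE HR Hb eps he.
  assert (he3 : 0 < eps * I / 3) by (apply Rdiv_lt_0_compat; nra).
  destruct (HJ _ he3) as [e1 [he1 H1]]. destruct (HE _ he3) as [e2 [he2 H2]].
  destruct (HR _ he3) as [e3 [he3' H3]].
  exists (Rmin e1 (Rmin e2 e3)). split; [repeat apply Rmin_pos; auto|].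
  intros d hd.
  pose proof (Rmin_l e1 (Rmin e2 e3)). pose proof (Rmin_r e1 (Rmin e2 e3)).
  pose proof (Rmin_l e2 e3). pose proof (Rmin_r e2 e3).
  specialize (H1 d ltac:(lra)). specialize (H2 d ltac:(lra)). specialize (H3 d ltac:(lra)).
  specialize (hL d ltac:(lra)). specialize (Hb d ltac:(lra)).
  rewrite Rminus_0_r in H2, H3. apply Rabs_def2 in H1, H2, H3.
  assert (hLI : 0 < L d * I) by nra.
  assert (Eq : F d / (L d * I) - 1 = (F d / L d - I) / I) by (field; lra).
  assert (hF : J d - E d <= F d / L d <= J d + Rm d).
  { split; apply Rmult_le_reg_r with (L d); auto; unfold Rdiv;
      rewrite Rmult_assoc, Rinv_l by lra; lra. }
  rewrite Eq. unfold Rdiv. rewrite Rabs_mult, Rabs_inv, (Rabs_right I) by lra.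
  apply Rmult_lt_reg_r with I; auto. rewrite Rmult_assoc, Rinv_l by lra.
  rewrite Rmult_1_r. apply Rabs_def1; lra.
Qed.

Lemma scale_pow alpha c nu : 0 < alpha -> 0 < c -> 0 < nu ->
  Rpower (Rpower alpha (2*nu/(2*nu+1)) * Rpower c (/(2*nu+1))) (2*nu+1)
  = c * Rpower alpha (2*nu).
Proof.
  intros ha hc hn. rewrite <- Rpower_mult_distr by apply Rpower_pos.
  rewrite !Rpower_mult. replace (2*nu/(2*nu+1)*(2*nu+1)) with (2*nu) by (field; lra).
  replace (/(2*nu+1)*(2*nu+1)) with 1 by (field; lra). rewrite Rpower_1 by auto. ring.
Qed.

Lemma scale_ratio alpha K nu : 0 < alpha -> 0 < K -> 0 < nu ->
  alpha / (Rpower alpha (2*nu/(2*nu+1)) * K) = Rpower alpha (/(2*nu+1)) / K.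
Proof.
  intros ha hK hn. rewrite <- (Rpower_1 alpha) at 1 by auto.
  replace 1 with (2 * nu / (2 * nu + 1) + / (2 * nu + 1)) at 1 by (field; lra).
  rewrite Rpower_plus. field. split; [lra|apply Rgt_not_eq, Rpower_pos].
Qed.

Lemma phi_profile_integral phi p : admissible phi -> 2 <= p ->
  improper_integral_R (fun x => phi (profile p x)) (integral_R (fun x => phi (profile p x)))
  /\ 0 < integral_R (fun x => phi (profile p x)).
Proof.
  intros hphi hp.
  assert (cpsi : forall x, continuity_pt (fun x => phi (profile p x)) x)
    by (intro; apply phi_profile_cont; auto; lra).
  assert (bpsi : forall x, 0 <= phi (profile p x) <= 2 / (1 + x^2)).
  { intro x. pose proof (profile_range p x). pose proof (adm_range _ hphi (profile p x)).
    pose proof (profile_le_cauchy p x hp). lra. }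
  assert (HI := integral_R_spec _ (improper_exists _ cpsi bpsi)).
  split; auto.
  apply (improper_integral_pos _ (phi (/ 2)) _ cpsi); [intro; apply bpsi|apply hphi| |exact HI].
  intros x hx. apply (adm_mono _ hphi); [lra|apply profile_half; auto; lra|].
    apply profile_range.
Qed.

Lemma integral_phi_adelta_equiv phi nu b theta : admissible phi -> / 2 <= nu -> 0 < b ->
  0 < theta ->
  equiv_at_0plus
    (fun delta => Rint (fun l => phi (adelta nu b delta theta l)) (- PI) PI)
    (fun delta => Rpower (delta * theta) (2 * nu / (2 * nu + 1))
                  * Rpower (2 * PI * C_nu nu * b) (/ (2 * nu + 1))
                  * integral_R (fun x => phi (profile (2 * nu + 1) x))).
Proof.
  intros hphi hnu hb ht. pose proof PI_RGT_0.
  destruct (phi_profile_integral phi (2 * nu + 1) hphi ltac:(lra)) as [HI hI].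
  set (c := 2 * PI * C_nu nu * b).
  assert (hc : 0 < c) by (pose proof (C_nu_pos nu ltac:(lra)); unfold c;
    apply Rmult_lt_0_compat; [apply Rmult_lt_0_compat|]; lra).
  set (K := Rpower c (/ (2 * nu + 1))). assert (hK : 0 < K) by apply Rpower_pos.
  set (L := fun d => Rpower (d * theta) (2 * nu / (2 * nu + 1)) * K).
  assert (hL : forall d, 0 < d -> 0 < L d) by (intros; apply Rmult_lt_0_compat; auto; apply Rpower_pos).
  assert (hdt : forall d, 0 < d -> 0 < d * theta) by (intros; nra).
  assert (HL : lim_0plus L 0).
  { apply (lim_0plus_ext (fun d => K * Rpower (d * theta) (2 * nu / (2 * nu + 1))));
      [intros; unfold L; ring|].
    apply lim_0plus_scal, lim_0plus_Rpower, Rdiv_lt_0_compat; auto using lim_0plus_linear; lra. }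
  apply (squeeze_equiv _ L
           (fun d => Rint (fun x => phi (profile (2 * nu + 1) x)) (- (PI / L d)) (PI / L d))
           (fun d => 2 * (d * theta / L d))
           (fun d => 16 * PI * Rpower (L d) (2 * nu)) _ hI hL).
  - exact (lim_0plus_window _ _ L HI hL HL).
  - apply (lim_0plus_ext (fun d => 2 / K * Rpower (d * theta) (/ (2 * nu + 1)))).
    { intros d hd. unfold L. rewrite scale_ratio by (auto; lra). field. lra. }
    apply lim_0plus_scal, lim_0plus_Rpower; auto using lim_0plus_linear.
    apply Rinv_0_lt_compat; lra.
  - apply lim_0plus_scal, lim_0plus_Rpower; auto; lra.
  - intros d hd. apply (adelta_integral_bounds phi hphi nu b d theta (L d)); auto.
    unfold L, K. rewrite scale_pow by (auto; lra). reflexivity.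
Qed.

Lemma admissible_id : admissible (fun y => y).
Proof. split; [intro; apply cont_id|intros; lra..]. Qed.

Lemma admissible_sq : admissible (fun y => y^2).
Proof. split; [intro; apply cont_pow2, cont_id|intros; nra..]. Qed.

Theorem lemma5p4 (nu b theta : R) (hnu : / 2 <= nu) (hb : 0 < b) (htheta : 0 < theta) :
  equiv_at_0plus
    (fun delta => Rint (fun lambda => adelta nu b delta theta lambda) (- PI) PI)
    (fun delta => Rpower (delta * theta) (2 * nu / (2 * nu + 1))
                  * Rpower (2 * PI * C_nu nu * b) (/ (2 * nu + 1))
                  * integral_R (fun x => / (1 + rpow (Rabs x) (2 * nu + 1))))
  /\
  equiv_at_0plus
    (fun delta => Rint (fun lambda => (adelta nu b delta theta lambda) ^ 2) (- PI) PI)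
    (fun delta => Rpower (delta * theta) (2 * nu / (2 * nu + 1))
                  * Rpower (2 * PI * C_nu nu * b) (/ (2 * nu + 1))
                  * integral_R (fun x => (/ (1 + rpow (Rabs x) (2 * nu + 1))) ^ 2)).
Proof.
  split.
  - exact (integral_phi_adelta_equiv (fun y => y) nu b theta admissible_id hnu hb htheta).
  - exact (integral_phi_adelta_equiv (fun y => y^2) nu b theta admissible_sq hnu hb htheta).
Qed.
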